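(* Let $n=7$, let $\mathcal{P}_0=\{p_{135},p_{147},p_{16},p_{23},p_{246},p_{257},p_{367},p_{45}\}$, where $p_{ijk}$ (resp. $p_{ij}$) is declared incident exactly to $l_i,l_j,l_k$ (resp. $l_i,l_j$) among $l_1,\dots,l_7$, and let $\mathcal{A}=\{(i,p)\in\{1,\dots,7\}\times\mathcal{P}_0: p\prec l_i\}$. Let $H$ be the free abelian group with basis $x_1,\dots,x_7$, $A=H^{\mathcal{A}}$, $S_p=\sum_{j:\,p\prec l_j}x_j$. Let $U\subseteq A$ be the subgroup generated by: $a^{(0)}_{i,p}$ for $(i,p)\in\mathcal{A}$, $a^{(0)}_{i,p}(j,q)=\delta_{i,j}\delta_{p,q}x_i$; $a^{(1)}_{i,p}$ for $i\in\{1,\dots,7\}$, $p\in\mathcal{P}_0$, $a^{(1)}_{i,p}(j,q)=\delta_{p,q}x_i$; $a^{(2)}_{i,p_1,p_2}$ for $i\in\{1,\dots,7\}$, $p_1,p_2\in\mathcal{P}_0$ both incident to $l_i$, $a^{(2)}_{i,p_1,p_2}(j,q)=\delta_{i,j}\delta_{p_1,q}S_{p_2}$. Let $B\subseteq A$ be the subgroup of maps $a$ with $a(i,p)=a(i,q)$ whenever $(i,p),(i,q)\in\mathcal{A}$. Let $a_0\in A$ be the map with $a_0(4,p_{45})=x_7-x_6-x_3$, $a_0(2,p_{23})=-x_5$, $a_0(6,p_{246})=-x_7$, and $a_0(i,p)=0$ for all other $(i,p)\in\mathcal{A}$. Then the image of $a_0$ in $W=A/(U+B)$ is non-zero.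
   Context: This is the MacLane configuration $C_8$ (affine plane over $\mathbb{F}_3$ with one point deleted), with lines $l_0,\dots,l_7$ and points $p_{012},p_{034},p_{056},p_{07},p_{135},p_{147},p_{16},p_{23},p_{246},p_{257},p_{367},p_{45}$, where $p_{ijk}$ is incident exactly to $l_i,l_j,l_k$ and $p_{ij}$ exactly to $l_i,l_j$; $\mathcal{P}_0$ is the set of points not on $l_0$. *)

From HB Require Import structures.
From mathcomp Require Import all_boot all_order all_algebra.
Set Implicit Arguments. Unset Strict Implicit. Unset Printing Implicit Defensive.
Import GRing.Theory.
Local Open Scope ring_scope.

(* Lines l_1..l_7 are encoded as i : 'I_7 with l_{i+1} <-> i.
   Points of P_0 are encoded as p : 'I_8 in the order
   0:p135 1:p147 2:p16 3:p23 4:p246 5:p257 6:p367 7:p45. *)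
Definition lines_of (p : 'I_8) : seq nat :=
  nth [::] [:: [:: 1; 3; 5]; [:: 1; 4; 7]; [:: 1; 6]; [:: 2; 3];
               [:: 2; 4; 6]; [:: 2; 5; 7]; [:: 3; 6; 7]; [:: 4; 5]] p.

Definition inc (p : 'I_8) (i : 'I_7) : bool := (i : nat).+1 \in lines_of p.

Definition pt (k : nat) : 'I_8 := inord k.
Definition ln (k : nat) : 'I_7 := inord k.-1.

Definition H := {ffun 'I_7 -> int}.
Definition x (i : 'I_7) : H := [ffun k => (k == i)%:Z].
Definition S (p : 'I_8) : H := \sum_(j | inc p j) x j.

(* A = H^{\mathcal A}; we use functions on all pairs (i,p) and only ever
   compare them on the pairs of \mathcal A (see eqA). *)
Definition Aty := {ffun 'I_7 -> {ffun 'I_8 -> H}}.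
Definition eqA (a b : Aty) : Prop := forall i p, inc p i -> a i p = b i p.

Definition gen0 (i : 'I_7) (p : 'I_8) : Aty :=
  [ffun j => [ffun q => if (j == i) && (q == p) then x i else 0]].
Definition gen1 (i : 'I_7) (p : 'I_8) : Aty :=
  [ffun j => [ffun q => if q == p then x i else 0]].
Definition gen2 (i : 'I_7) (p1 p2 : 'I_8) : Aty :=
  [ffun j => [ffun q => if (j == i) && (q == p1) then S p2 else 0]].

Definition inU (u : Aty) : Prop :=
  exists (c0 c1 : 'I_7 -> 'I_8 -> int) (c2 : 'I_7 -> 'I_8 -> 'I_8 -> int),
    eqA u ((\sum_(i < 7) \sum_(p < 8 | inc p i) gen0 i p *~ c0 i p)
         + (\sum_(i < 7) \sum_(p < 8) gen1 i p *~ c1 i p)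
         + (\sum_(i < 7) \sum_(p1 < 8 | inc p1 i) \sum_(p2 < 8 | inc p2 i)
               gen2 i p1 p2 *~ c2 i p1 p2)).

Definition inB (b : Aty) : Prop :=
  forall i p q, inc p i -> inc q i -> b i p = b i q.

Definition inUB (a : Aty) : Prop :=
  exists u b, inU u /\ inB b /\ eqA a (u + b).

Definition a0 : Aty :=
  [ffun j => [ffun q =>
     if (j == ln 4) && (q == pt 7) then x (ln 7) - x (ln 6) - x (ln 3)
     else if (j == ln 2) && (q == pt 3) then - x (ln 5)
     else if (j == ln 6) && (q == pt 4) then - x (ln 7)
     else 0]].

(* The image of a_0 is detected by a linear functional A -> Z/3Z vanishing on
   U + B.  Such a functional pairs a(i,p) with a weight vector w(i,p) over all
   flags (i,p) of A.  Vanishing on a^(0), a^(1), a^(2) and on B becomes a finite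
   linear system for w: w(i,p) has no x_i component, sum_{j : p on l_j} w(j,p)
   = 0, the entries of w(i,p) over the lines through any point of l_i sum to 0,
   and sum_{p on l_i} w(i,p) = 0.  An explicit solution with nonzero pairing
   against a_0 is given below and checked by computation. *)

From HB Require Import structures.
From mathcomp Require Import all_boot all_order all_algebra.
Set Implicit Arguments. Unset Strict Implicit. Unset Printing Implicit Defensive.
Import GRing.Theory.
Local Open Scope ring_scope.

Lemma sum_if_eq (V : nmodType) (I : finType) (P : pred I) (i0 : I)
    (F : I -> V) :
  \sum_(i | P i) (if i == i0 then F i else 0) = if P i0 then F i0 else 0.
Proof.
rewrite -big_mkcondr; case: ifP => Pi0.
  by apply: big_pred1 => i /=; case: eqP => [->|]; rewrite ?andbT ?andbF.
by rewrite big_pred0 // => i; case: eqP => [->|]; rewrite ?andbT ?andbF.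
Qed.

Section Pairing.

Variable R : pzRingType.

Definition hdot (v : 'I_7 -> R) (h : H) : R := \sum_k v k * (h k)%:~R.

Lemma hdot_is_zmod_morphism v : zmod_morphism (hdot v).
Proof.
move=> h1 h2; rewrite /hdot -sumrB; apply: eq_bigr => k _.
by rewrite !ffunE intrD intrN mulrBr.
Qed.

HB.instance Definition _ v :=
  GRing.isZmodMorphism.Build H R (hdot v) (hdot_is_zmod_morphism v).

Lemma hdot_x v j : hdot v (x j) = v j.
Proof.
rewrite /hdot (bigD1 j) //= big1 => [|k /negbTE kNj]; rewrite ffunE.
  by rewrite eqxx mulr1 addr0.
by rewrite kNj mulr0.
Qed.

Lemma hdot_S v p : hdot v (S p) = \sum_(k | inc p k) v k.
Proof. by rewrite /S raddf_sum; apply: eq_bigr => k _; exact: hdot_x. Qed.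

Variable w : 'I_7 -> 'I_8 -> 'I_7 -> R.

Definition pairing (a : Aty) : R :=
  \sum_i \sum_(p | inc p i) hdot (w i p) (a i p).

Lemma pairing_is_zmod_morphism : zmod_morphism pairing.
Proof.
move=> a b; rewrite /pairing -sumrB; apply: eq_bigr => i _.
by rewrite -sumrB; apply: eq_bigr => p _; rewrite !ffunE raddfB.
Qed.

HB.instance Definition _ :=
  GRing.isZmodMorphism.Build Aty R pairing pairing_is_zmod_morphism.

Lemma pairing_eqA a b : eqA a b -> pairing a = pairing b.
Proof.
by move=> eq_ab; apply: eq_bigr => i _; apply: eq_bigr => p pi; rewrite eq_ab.
Qed.

Definition single (i : 'I_7) (p : 'I_8) (h : H) : Aty :=
  [ffun j => [ffun q => if (j == i) && (q == p) then h else 0]].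

Lemma pairing_single i p h : inc p i -> pairing (single i p h) = hdot (w i p) h.
Proof.
move=> pi; rewrite /pairing (bigD1 i) //= [X in _ + X]big1 => [|j jNi].
  under eq_bigr => q _ do rewrite !ffunE eqxx /= fun_if raddf0.
  by rewrite sum_if_eq pi addr0.
by rewrite big1 // => q _; rewrite !ffunE (negbTE jNi) raddf0.
Qed.

Lemma pairing_gen0 i p : inc p i -> pairing (gen0 i p) = w i p i.
Proof. by move=> pi; rewrite (pairing_single _ pi) hdot_x. Qed.

Lemma pairing_gen2 i p1 p2 :
  inc p1 i -> pairing (gen2 i p1 p2) = \sum_(k | inc p2 k) w i p1 k.
Proof. by move=> p1i; rewrite (pairing_single _ p1i) hdot_S. Qed.

Lemma pairing_gen1 i p : pairing (gen1 i p) = \sum_(j | inc p j) w j p i.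
Proof.
rewrite /pairing [RHS]big_mkcond; apply: eq_bigr => j _.
under eq_bigr => q _ do rewrite !ffunE fun_if raddf0 hdot_x.
by rewrite sum_if_eq.
Qed.

Hypothesis w_gen0 : forall i p, inc p i -> w i p i = 0.
Hypothesis w_gen1 : forall i p, \sum_(j | inc p j) w j p i = 0.
Hypothesis w_gen2 : forall i p1 p2, inc p1 i -> inc p2 i ->
  \sum_(k | inc p2 k) w i p1 k = 0.
Hypothesis w_lines : forall i k, \sum_(p | inc p i) w i p k = 0.

Lemma pairing_inB b : inB b -> pairing b = 0.
Proof.
move=> b_const; rewrite /pairing big1 // => i _.
have [p0 p0i | noP] := pickP (inc ^~ i); last by rewrite big_pred0.
under eq_bigr => p pi do rewrite (b_const i p p0 pi p0i).
rewrite /hdot exchange_big big1 //= => k _.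
by rewrite -mulr_suml w_lines mul0r.
Qed.

Lemma pairing_inU u : inU u -> pairing u = 0.
Proof.
move=> [c0 [c1 [c2 /pairing_eqA ->]]]; rewrite !raddfD /= !raddf_sum.
rewrite !big1 ?addr0 // => i _; rewrite raddf_sum big1 // => p1 p1i.
- rewrite raddf_sum big1 // => p2 p2i.
  by rewrite raddfMz /= pairing_gen2 // w_gen2 // mul0rz.
- by rewrite raddfMz /= pairing_gen1 w_gen1 mul0rz.
- by rewrite raddfMz /= pairing_gen0 // w_gen0 // mul0rz.
Qed.

Lemma pairing_inUB a : inUB a -> pairing a = 0.
Proof.
move=> [u [b [uU [bB /pairing_eqA ->]]]].
by rewrite raddfD /= pairing_inU // pairing_inB // addr0.
Qed.

End Pairing.

Lemma a0_singles :
  a0 = single (ln 4) (pt 7) (x (ln 7) - x (ln 6) - x (ln 3))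
     + single (ln 2) (pt 3) (- x (ln 5)) + single (ln 6) (pt 4) (- x (ln 7)).
Proof.
apply/ffunP => j; apply/ffunP => q.
rewrite !ffunE /ln /pt -!val_eqE /= !inordK //.
by case: (nat_of_ord j) => [|[|[|[|[|[|[|?]]]]]]]; rewrite /= ?add0r ?addr0.
Qed.

Lemma pairing_a0 (R : pzRingType) (w : 'I_7 -> 'I_8 -> 'I_7 -> R) :
  pairing w a0 = w (ln 4) (pt 7) (ln 7) - w (ln 4) (pt 7) (ln 6)
    - w (ln 4) (pt 7) (ln 3) - w (ln 2) (pt 3) (ln 5) - w (ln 6) (pt 4) (ln 7).
Proof.
have /and3P[inc74 inc32 inc46] :
    [&& inc (pt 7) (ln 4), inc (pt 3) (ln 2) & inc (pt 4) (ln 6)].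
  by rewrite /inc /lines_of /pt /ln !inordK.
rewrite a0_singles !raddfD /= !pairing_single //.
by rewrite !raddfB !raddfN /= !hdot_x.
Qed.

Lemma index_enum_ord0 : index_enum 'I_0 = [::].
Proof. by rewrite [index_enum _]unlock -enumT enum_ord0. Qed.

Lemma index_enum_ordS n :
  index_enum 'I_n.+1 = ord0 :: map (lift ord0) (index_enum 'I_n).
Proof. by rewrite ![index_enum _]unlock -!enumT enum_ordSl. Qed.

Lemma all_index_enumP (T : finType) (P : pred T) :
  reflect (forall t, P t) (all P (index_enum T)).
Proof.
apply: (iffP allP) => [allP t | allP t _]; last exact: allP.
exact/allP/mem_index_enum.
Qed.

(* [Finite.enum] is locked, so [vm_compute] can only decide a finite check
   over ordinals after the enumeration is rebuilt with [index_enum_ordS]. *)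
Ltac enumerate :=
  rewrite ?bigop.unlock !index_enum_ordS !index_enum_ord0;
  vm_compute; reflexivity.

(* On each line l_i the weight is +c_i at one point, -c_i at another and 0
   elsewhere (l_7 falls back on the default entry: weight 0).  Around p_135 the
   signed sum c_1 + c_3 - c_5 is 3 x_7, which is why we work modulo 3. *)
Definition dipoles : seq (nat * nat * seq int) :=
  [:: (0%N, 2%N, [:: 0; 1; -1; -1; 1; 0; 1]);
      (3%N, 4%N, [:: 1; 0; 0; 1; -1; -1; 1]);
      (0%N, 3%N, [:: 1; 0; 0; 1; -1; -1; 1]);
      (4%N, 7%N, [:: 1; 1; -1; 0; 0; -1; -1]);
      (7%N, 0%N, [:: 1; 1; -1; 0; 0; -1; -1]);
      (2%N, 4%N, [:: 0; 1; -1; -1; 1; 0; 1])].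

Definition witness (i : 'I_7) (p : 'I_8) (k : 'I_7) : 'Z_3 :=
  let: (plus, minus, c) := nth (0%N, 0%N, [::]) dipoles i in
  ((p == plus :> nat)%:R - (p == minus :> nat)%:R) * (nth 0 c k)%:~R.

Lemma witness_gen0 i p : inc p i -> witness i p i = 0.
Proof.
have: all (fun i => all (fun p => inc p i ==> (witness i p i == 0))
                        (index_enum 'I_8)) (index_enum 'I_7) by enumerate.
by move=> /all_index_enumP/(_ i)/all_index_enumP/(_ p)/implyP h /h/eqP.
Qed.

Lemma witness_gen1 i p : \sum_(j | inc p j) witness j p i = 0.
Proof.
have: all (fun i => all (fun p => \sum_(j | inc p j) witness j p i == 0)
                        (index_enum 'I_8)) (index_enum 'I_7) by enumerate.
by move=> /all_index_enumP/(_ i)/all_index_enumP/(_ p)/eqP.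
Qed.

Lemma witness_gen2 i p1 p2 :
  inc p1 i -> inc p2 i -> \sum_(k | inc p2 k) witness i p1 k = 0.
Proof.
have: all (fun i => all (fun p1 => all (fun p2 =>
          inc p1 i ==> inc p2 i ==> (\sum_(k | inc p2 k) witness i p1 k == 0))
        (index_enum 'I_8)) (index_enum 'I_8)) (index_enum 'I_7) by enumerate.
move=> /all_index_enumP/(_ i)/all_index_enumP/(_ p1)/all_index_enumP/(_ p2).
by move=> /implyP h /h /implyP h' /h' /eqP.
Qed.

Lemma witness_lines i k : \sum_(p | inc p i) witness i p k = 0.
Proof.
have: all (fun i => all (fun k => \sum_(p | inc p i) witness i p k == 0)
                        (index_enum 'I_7)) (index_enum 'I_7) by enumerate.
by move=> /all_index_enumP/(_ i)/all_index_enumP/(_ k)/eqP.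
Qed.

Lemma pairing_witness_a0 : pairing witness a0 != 0.
Proof. by rewrite pairing_a0 /witness /ln /pt !inordK //; vm_compute. Qed.

Theorem lemma3p2 : ~ inUB a0.
Proof.
move=> /(pairing_inUB witness_gen0 witness_gen1 witness_gen2 witness_lines)/eqP.
exact/negP/pairing_witness_a0.
Qed.
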